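(* Consider a complete 4-node network with nodes $A,B,C,D$, where for each ordered pair of distinct nodes $(X,Y)$ the directed link $XY$ has capacity $XY>0$. Define \[ I^*=\min\{BA+CA,BA+DA,CA+DA,AB+CB,AB+DB,CB+DB,AC+BC,AC+DC,BC+DC,AD+BD,AD+CD,BD+CD\}, \] and for distinct nodes $X,Y$ write $\widehat{XY}=XY+YX$. Then for any positive value $R<I^*$, there is a set of three distinct nodes $\{X,Y,Z\}$ such that $\widehat{XY}>R$ and $\widehat{XZ}>R$.
   Context: Here $XY$ denotes the capacity (maximum number of bits per unit time) of the directed link from node $X$ to node $Y$. *)

From Stdlib Require Import Reals.
Open Scope R_scope.

Inductive node := A | B | C | D.

(* c X Y is the capacity XY of the directed link X -> Y. *)
Definition Istar (c : node -> node -> R) : R :=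
  Rmin (c B A + c C A) (Rmin (c B A + c D A) (Rmin (c C A + c D A)
  (Rmin (c A B + c C B) (Rmin (c A B + c D B) (Rmin (c C B + c D B)
  (Rmin (c A C + c B C) (Rmin (c A C + c D C) (Rmin (c B C + c D C)
  (Rmin (c A D + c B D) (Rmin (c A D + c C D) (c B D + c C D))))))))))).

Definition hat (c : node -> node -> R) (X Y : node) : R := c X Y + c Y X.

(* Call an edge XY good when [hat c X Y > R0].  Since [R0 < Istar c], the two
   links entering any node from two other nodes carry more than R0.  Along a
   4-cycle X-Y-Z-W every node has two cycle neighbours, so the eight capacities
   of the cycle sum to more than 4 R0, and some edge of the cycle is good.  The
   4-cycle avoiding a good edge XY and its complementary edge consists of edges
   meeting X or Y, so it yields a second good edge sharing an endpoint with XY. *)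

From Pilot Require Import Defs.
From Stdlib Require Import Reals Lra.
Open Scope R_scope.

Lemma hat_comm (c : node -> node -> R) (X Y : node) : hat c X Y = hat c Y X.
Proof. unfold hat; ring. Qed.

Lemma Istar_le_in (c : node -> node -> R) (X Y Z : node) :
  X <> Y -> X <> Z -> Y <> Z -> Istar c <= c X Z + c Y Z.
Proof.
  intros hXY hXZ hYZ.
  assert (hterms :
    Istar c <= c B A + c Defs.C A /\ Istar c <= c B A + c D A /\
    Istar c <= c Defs.C A + c D A /\ Istar c <= c A B + c Defs.C B /\
    Istar c <= c A B + c D B /\ Istar c <= c Defs.C B + c D B /\
    Istar c <= c A Defs.C + c B Defs.C /\ Istar c <= c A Defs.C + c D Defs.C /\
    Istar c <= c B Defs.C + c D Defs.C /\ Istar c <= c A D + c B D /\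
    Istar c <= c A D + c Defs.C D /\ Istar c <= c B D + c Defs.C D).
  { unfold Istar.
    repeat split;
      repeat first [ apply Rmin_l | apply Rle_refl
                   | eapply Rle_trans; [apply Rmin_r |] ]. }
  destruct X, Y, Z; try congruence; lra.
Qed.

Section GoodEdges.

Variables (c : node -> node -> R) (R0 : R).
Hypothesis hR : R0 < Istar c.

Lemma cycle_has_good_edge (X Y Z W : node) :
  X <> Y -> X <> Z -> X <> W -> Y <> Z -> Y <> W -> Z <> W ->
  hat c X Y > R0 \/ hat c Y Z > R0 \/ hat c Z W > R0 \/ hat c W X > R0.
Proof.
  intros hXY hXZ hXW hYZ hYW hZW.
  pose proof (Istar_le_in c W Y X ltac:(congruence) ltac:(congruence) ltac:(congruence)).
  pose proof (Istar_le_in c X Z Y ltac:(congruence) ltac:(congruence) ltac:(congruence)).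
  pose proof (Istar_le_in c Y W Z ltac:(congruence) ltac:(congruence) ltac:(congruence)).
  pose proof (Istar_le_in c Z X W ltac:(congruence) ltac:(congruence) ltac:(congruence)).
  unfold hat.
  destruct (Rlt_le_dec R0 (c X Y + c Y X)); [now left |].
  destruct (Rlt_le_dec R0 (c Y Z + c Z Y)); [now right; left |].
  destruct (Rlt_le_dec R0 (c Z W + c W Z)); [now right; right; left |].
  right; right; right.
  lra.
Qed.

Lemma good_edge_extends (X Y Z W : node) :
  hat c X Y > R0 ->
  X <> Y -> X <> Z -> X <> W -> Y <> Z -> Y <> W -> Z <> W ->
  exists U V T : node, U <> V /\ U <> T /\ V <> T /\
    hat c U V > R0 /\ hat c U T > R0.
Proof.
  intros hgood hXY hXZ hXW hYZ hYW hZW.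
  destruct (cycle_has_good_edge X Z Y W) as [h | [h | [h | h]]];
    try congruence.
  - exists X, Y, Z; auto.
  - rewrite hat_comm in h, hgood; exists Y, X, Z; auto.
  - exists Y, X, W; rewrite hat_comm; auto.
  - rewrite hat_comm in h; exists X, Y, W; auto.
Qed.

End GoodEdges.

Theorem corollary1 (c : node -> node -> R)
  (hpos : forall X Y : node, X <> Y -> 0 < c X Y)
  (R0 : R) (hR0 : 0 < R0) (hR : R0 < Istar c) :
  exists X Y Z : node, X <> Y /\ X <> Z /\ Y <> Z /\
    hat c X Y > R0 /\ hat c X Z > R0.
Proof.
  destruct (cycle_has_good_edge c R0 hR A Defs.C B D) as [h | [h | [h | h]]];
    try discriminate.
  - apply (good_edge_extends c R0 hR A Defs.C B D h); discriminate.
  - apply (good_edge_extends c R0 hR Defs.C B A D h); discriminate.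
  - apply (good_edge_extends c R0 hR B D A Defs.C h); discriminate.
  - apply (good_edge_extends c R0 hR D A B Defs.C h); discriminate.
Qed.
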